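(* Let $p,q\in\mathbb R$, $\tilde p=p-2p^2$. The fifth order differential equation \begin{align*} &x^5R^{(5)}+10x^4R^{(4)}+x^3(20x^2-20qx+22+10\tilde p)R'''+x^2(64x^2-76qx+4+44\tilde p)R''\\ &+4x\big(16x^4-32qx^3+4(4q^2+4\tilde p+1)x^2-q(6+16\tilde p)x+4\tilde p^2+7\tilde p-1\big)R'\\ &+8\big(-4qx^3+4(q^2+\tilde p)x^2-q(6\tilde p-1)x+2\tilde p^2\big)R=0 \end{align*} admits a unique formal solution of the form $R(x)=\frac1\pi+\frac1\pi\sum_{n\ge1}\pi^n g_nx^{-n}$, with $$g_1=-\frac{q}{2\pi},\ g_2=\frac{2\tilde p-q^2}{8\pi^2},\ g_3=-\frac{q(-1-2\tilde p+q^2)}{16\pi^3},\ g_4=\frac{-16\tilde p-4\tilde p^2+19q^2+12\tilde pq^2-5q^4}{128\pi^4},$$ and for $n\ge1$ \begin{align*} &64(n+4)\pi^4g_{n+4}-32q(4n+11)\pi^3g_{n+3}\\ &+4\big(32+54n+29n^2+5n^3+8\tilde p(2n+3)+24q^2+16nq^2\big)\pi^2g_{n+2}\\ &-4q\big(4\tilde p(1+4n)+n(4+11n+5n^2)\big)\pi g_{n+1}\\ &+(n-1)\big(16\tilde p^2+2\tilde pn(5n-2)+n^2(n^2+n-2)\big)g_n=0. \end{align*}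
   Context: This differential equation is satisfied by $R(x)=\frac1\pi\rho_{(1),\infty}(x/\pi;4,p,q)$, the rescaled bulk density at the spectrum singularity of the generalised circular Jacobi ensemble with $\beta=4$ (probability density on $(-\pi,\pi]^N$ proportional to $\prod_l e^{q\theta_l}|1+e^{i\theta_l}|^{4p}\prod_{j<k}|e^{i\theta_k}-e^{i\theta_j}|^4$, scaled density $\rho_{(1),\infty}(x)=\lim_{N\to\infty}\frac{2\pi}{N}\rho_{(1),N}(-\pi\,\mathrm{sgn}(x)+2\pi x/N)$). *)

From HB Require Import structures.
From mathcomp Require Import all_boot all_order all_algebra.
From mathcomp Require Import reals trigo.
Set Implicit Arguments. Unset Strict Implicit. Unset Printing Implicit Defensive.
Import Order.TTheory GRing.Theory Num.Theory.
Local Open Scope ring_scope.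

(* A formal series in powers of x with integer exponents:
   a k is the coefficient of x^k (k : int).  All operations below
   (differentiation, multiplication by a polynomial in x) are
   coefficientwise finite, so no convergence is involved. *)

Section FormalSeries.
Variable R : realType.

Definition fder (a : int -> R) : int -> R := fun k => (k + 1)%:~R * a (k + 1).

Definition fder_n (n : nat) (a : int -> R) : int -> R := iter n fder a.

Definition pmul (P : {poly R}) (a : int -> R) : int -> R :=
  fun k => \sum_(i < size P) P`_i * a (k - (i%:Z)).

Definition ptilde (p : R) : R := p - 2 * p ^+ 2.

Definition odeL (p q : R) (a : int -> R) : int -> R :=
  let pt := ptilde p in
  fun k =>
      pmul ('X^5) (fder_n 5 a) k
    + pmul (10%:P * 'X^4) (fder_n 4 a) k
    + pmul ('X^3 * (20%:P * 'X^2 - (20 * q)%:P * 'X + (22 + 10 * pt)%:P))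
           (fder_n 3 a) k
    + pmul ('X^2 * (64%:P * 'X^2 - (76 * q)%:P * 'X + (4 + 44 * pt)%:P))
           (fder_n 2 a) k
    + pmul (4%:P * 'X * (16%:P * 'X^4 - (32 * q)%:P * 'X^3
                         + (4 * (4 * q ^+ 2 + 4 * pt + 1))%:P * 'X^2
                         - (q * (6 + 16 * pt))%:P * 'X
                         + (4 * pt ^+ 2 + 7 * pt - 1)%:P))
           (fder_n 1 a) k
    + pmul (8%:P * (- (4 * q)%:P * 'X^3 + (4 * (q ^+ 2 + pt))%:P * 'X^2
                    - (q * (6 * pt - 1))%:P * 'X + (2 * pt ^+ 2)%:P))
           a k.

(* The formal series R(x) = (1/pi) * sum_(n>=0) pi^n g_n x^(-n)
   (with the normalization g_0 = 1 imposed separately). *)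
Definition ser_of (g : nat -> R) : int -> R :=
  fun k => if k <= 0 then pi^-1 * pi ^+ `|k|%N * g `|k|%N else 0.

End FormalSeries.

From HB Require Import structures.
From mathcomp Require Import all_boot all_order all_algebra.
From mathcomp Require Import reals trigo.
From mathcomp Require Import ring zify.
Import Order.TTheory GRing.Theory Num.Theory.
Set Implicit Arguments. Unset Strict Implicit. Unset Printing Implicit Defensive.
Local Open Scope ring_scope.

(* The coefficient of x^k in L[a], for L the fifth order operator odeL and a a
   formal series sum_k a_k x^k, is a five-term relation
     c0(k) a_k + c1(k) a_(k-1) + c2(k) a_(k-2) + c3(k) a_(k-3) + c4(k) a_(k-4)
   (odeL_shift): each power of x in the polynomial coefficients lowers the
   index by one and each derivative multiplies by a falling factorial.
   For the ansatz a = ser_of g, i.e. a_(-n) = pi^(n-1) g_n, the coefficient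
   of x^(-n) is, up to the nonzero factor -pi^(n-1), exactly the four-step
   recurrence of the statement at index n (odeL_ser_neg); the coefficients
   of x^k for k = 1, 2, 3 fix g_1, g_2, g_3, and the recurrence at n = 0
   fixes g_4.  Since c4(4 - n) = -64 n is nonzero for n >= 1, the coefficient
   of x^(4-n) determines g_n from g_0, ..., g_(n-1), which gives uniqueness
   (ode_solution_unique). *)

Section OrderFourRecurrence.
Variables (T : Type) (step : nat -> T -> T -> T -> T -> T) (x0 x1 x2 x3 : T).

Fixpoint window (m : nat) : T * T * T * T :=
  if m is m'.+1 then
    let: (a, b, c, d) := window m' in (b, c, d, step m' a b c d)
  else (x0, x1, x2, x3).

Definition rec4 (n : nat) : T := (window n).1.1.1.

Lemma window_succ m : window m.+1 =
  ((window m).1.1.2, (window m).1.2, (window m).2,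
   step m (window m).1.1.1 (window m).1.1.2 (window m).1.2 (window m).2).
Proof. by rewrite /=; case: (window m) => [[[a b] c] d]. Qed.

Lemma rec4_step m :
  rec4 m.+4 = step m (rec4 m) (rec4 m.+1) (rec4 m.+2) (rec4 m.+3).
Proof. by rewrite /rec4 !window_succ. Qed.

End OrderFourRecurrence.

Section ShiftForm.
Variable R : realType.

Lemma pmul_sum (P : {poly R}) (a : int -> R) k n : (size P <= n)%N ->
  pmul P a k = \sum_(0 <= i < n) P`_i * a (k - i%:Z).
Proof.
move=> size_le; rewrite /pmul big_mkord.
rewrite (big_ord_widen n (fun i : nat => P`_i * a (k - i%:Z)) size_le) big_mkcond /=.
apply: eq_bigr => i _; case: ifP => // /negbT; rewrite -leqNgt => Pi.
by rewrite nth_default // mul0r.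
Qed.

Lemma size_le6 (P : {poly R}) : (forall j, P`_j.+4.+2 = 0) -> (size P <= 6)%N.
Proof. by move=> P_hi; apply/leq_sizeP => -[|[|[|[|[|[|j]]]]]] // _. Qed.

Variables (q pt : R).

Definition ode_c0 (k : int) : R := let kr : R := k%:~R in
  kr * (kr - 1) * (kr - 2) * (kr - 3) * (kr - 4) + 10 * kr * (kr - 1) * (kr - 2) * (kr - 3)
  + (22 + 10 * pt) * kr * (kr - 1) * (kr - 2) + (4 + 44 * pt) * kr * (kr - 1)
  + 4 * (4 * pt ^+ 2 + 7 * pt - 1) * kr + 16 * pt ^+ 2.
Definition ode_c1 (k : int) : R := let kr : R := k%:~R in
  - 20 * q * (kr - 1) * (kr - 2) * (kr - 3) - 76 * q * (kr - 1) * (kr - 2)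
  - 4 * q * (6 + 16 * pt) * (kr - 1) - 8 * q * (6 * pt - 1).
Definition ode_c2 (k : int) : R := let kr : R := k%:~R in
  20 * (kr - 2) * (kr - 3) * (kr - 4) + 64 * (kr - 2) * (kr - 3)
  + 16 * (4 * q ^+ 2 + 4 * pt + 1) * (kr - 2) + 32 * (q ^+ 2 + pt).
Definition ode_c3 (k : int) : R := - 128 * q * (k%:~R - 3) - 32 * q.
Definition ode_c4 (k : int) : R := 64 * (k%:~R - 4).

End ShiftForm.

Lemma odeL_shift (R : realType) (p q : R) (a : int -> R) k :
  let pt := ptilde p in
  odeL p q a k = ode_c0 pt k * a k + ode_c1 q pt k * a (k - 1%:Z)
    + ode_c2 q pt k * a (k - 2%:Z) + ode_c3 q k * a (k - 3%:Z) + ode_c4 R k * a (k - 4%:Z).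
Proof.
move=> pt; rewrite /odeL -/pt !(pmul_sum _ _ _ (n := 6)); last first.
all: try by apply: size_le6 => j; rewrite -?mulrA !coefE /= ?(mulr0, addr0, subr0, mul0r, oppr0).
rewrite /index_iota /= !big_cons !big_nil -?mulrA !coefE /= /fder_n /= /fder.
have shift1 (x : int) (i : nat) : x - i.+1%:Z + 1 = x - i%:Z by lia.
rewrite !shift1 !subr0 /ode_c0 /ode_c1 /ode_c2 /ode_c3 /ode_c4 !(intrD, intrB).
ring.
Qed.

Section SeriesCoefficients.
Variable R : realType.
Implicit Types (g : nat -> R) (z : int).

Lemma ser_of_neg g z (n : nat) : z = - n%:Z -> ser_of g z = pi^-1 * pi ^+ n * g n.
Proof. by move=> ->; rewrite /ser_of oppr_le0 abszN absz_nat. Qed.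

Lemma ser_of_pos g z : 0 < z -> ser_of g z = 0.
Proof. by move=> z_gt0; rewrite /ser_of lt_geF. Qed.

Lemma ser_of_sub g (j s : nat) : ser_of g (j%:Z - s%:Z) =
  if (j <= s)%N then pi^-1 * pi ^+ (s - j) * g (s - j)%N else 0.
Proof. by case: leqP => js; [apply: ser_of_neg | apply: ser_of_pos]; lia. Qed.

(* ser_of g at x^z only involves g_(-z); hence sequences agreeing below n give
   series agreeing at every power above x^(-n). *)
Lemma ser_of_agree g g' (n : nat) : (forall i, (i < n)%N -> g' i = g i) ->
  forall z, - n%:Z < z -> ser_of g' z = ser_of g z.
Proof.
move=> eq_gg' z; have [z_gt0 _|z_le0 z_gt] := ltrP 0 z.
  by rewrite !ser_of_pos.
by rewrite !(ser_of_neg _ (n := `|z|%N)) ?eq_gg' //; lia.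
Qed.

End SeriesCoefficients.

Section Recurrence.
Variables (R : realType) (q pt : R).

Lemma pi_neq0 : pi != 0 :> R.
Proof. by rewrite gt_eqF // pi_gt0. Qed.

Definition rec_form (n : nat) (g0 g1 g2 g3 g4 : R) : R :=
  let nr : R := n%:R in
    64 * (nr + 4) * pi ^+ 4 * g4
  - 32 * q * (4 * nr + 11) * pi ^+ 3 * g3
  + 4 * (32 + 54 * nr + 29 * nr ^+ 2 + 5 * nr ^+ 3 + 8 * pt * (2 * nr + 3)
         + 24 * q ^+ 2 + 16 * nr * q ^+ 2) * pi ^+ 2 * g2
  - 4 * q * (4 * pt * (1 + 4 * nr) + nr * (4 + 11 * nr + 5 * nr ^+ 2)) * pi * g1
  + (nr - 1) * (16 * pt ^+ 2 + 2 * pt * nr * (5 * nr - 2)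
                + nr ^+ 2 * (nr ^+ 2 + nr - 2)) * g0.

Definition rec_lead (n : nat) : R := 64 * (n%:R + 4) * pi ^+ 4.

Lemma rec_lead_neq0 n : rec_lead n != 0.
Proof. by rewrite gt_eqF // /rec_lead !mulr_gt0 ?exprn_gt0 ?pi_gt0 ?ltr_wpDl. Qed.

Lemma rec_form_affine n g0 g1 g2 g3 g4 :
  rec_form n g0 g1 g2 g3 g4 = rec_form n g0 g1 g2 g3 0 + rec_lead n * g4.
Proof. rewrite /rec_form /rec_lead; ring. Qed.

Definition rec_next (n : nat) (g0 g1 g2 g3 : R) : R :=
  - rec_form n g0 g1 g2 g3 0 / rec_lead n.

Lemma rec_form_next n g0 g1 g2 g3 :
  rec_form n g0 g1 g2 g3 (rec_next n g0 g1 g2 g3) = 0.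
Proof.
by rewrite rec_form_affine /rec_next mulrC divfK ?rec_lead_neq0 // addrN.
Qed.

Definition g_init1 : R := - q / (2 * pi).
Definition g_init2 : R := (2 * pt - q ^+ 2) / (8 * pi ^+ 2).
Definition g_init3 : R := - (q * (-1 - 2 * pt + q ^+ 2)) / (16 * pi ^+ 3).
Definition g_init4 : R := (- 16 * pt - 4 * pt ^+ 2 + 19 * q ^+ 2
                           + 12 * pt * q ^+ 2 - 5 * q ^+ 4) / (128 * pi ^+ 4).

Definition gsol (n : nat) : R :=
  if n is n'.+1 then
    rec4 (fun m => rec_next m.+1) g_init1 g_init2 g_init3 g_init4 n'
  else 1.

(* gsol satisfies the recurrence at every index; at n = 0 this is a relation
   between the initial values (the coefficient of x^0 of the equation). *)
Lemma gsol_rec n :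
  rec_form n (gsol n) (gsol (n + 1)) (gsol (n + 2)) (gsol (n + 3)) (gsol (n + 4)) = 0.
Proof.
case: n => [|m]; last first.
  by rewrite !addnS !addn0 /= rec4_step rec_form_next.
rewrite /rec_form /gsol /rec4 /= /g_init1 /g_init2 /g_init3 /g_init4.
(* pi is abstracted so that field treats it as an opaque nonzero constant *)
move: pi_neq0; move: (pi : R) => P P_neq0.
by field; rewrite P_neq0.
Qed.

End Recurrence.

Lemma odeL_ser_neg (R : realType) (p q : R) (g : nat -> R) (n : nat) :
  odeL p q (ser_of g) (- n%:Z) = - (pi^-1 * pi ^+ n) *
    rec_form q (ptilde p) n (g n) (g (n + 1)%N) (g (n + 2)%N) (g (n + 3)%N) (g (n + 4)%N).
Proof.
rewrite odeL_shift (ser_of_neg _ (n := n)) // (ser_of_neg _ (n := (n + 1)%N)); last by lia.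
rewrite (ser_of_neg _ (n := (n + 2)%N)); last by lia.
rewrite (ser_of_neg _ (n := (n + 3)%N)); last by lia.
rewrite (ser_of_neg _ (n := (n + 4)%N)); last by lia.
rewrite /ode_c0 /ode_c1 /ode_c2 /ode_c3 /ode_c4 /rec_form intrN !exprD.
ring.
Qed.

Section Ode.
Variables (R : realType) (p q : R).

(* At x^1, x^2, x^3 the equation holds by the choice of g_1, g_2, g_3; at x^4
   and above every term vanishes. *)
Lemma gsol_ode_pos k : 0 < k -> odeL p q (ser_of (gsol q (ptilde p))) k = 0.
Proof.
case: k => // j; rewrite ltz_nat => j_gt0.
rewrite odeL_shift (ser_of_pos _ (z := j%:Z)) // !ser_of_sub.
case: j j_gt0 => [|[|[|[|[|j]]]]] //= _; last by rewrite !mulr0 !addr0.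
all: rewrite /ode_c0 /ode_c1 /ode_c2 /ode_c3 /ode_c4 /gsol /rec4 /= /g_init1 /g_init2 /g_init3.
all: move: (pi_neq0 R); move: (pi : R) => P P_neq0.
all: by field; rewrite P_neq0.
Qed.

Lemma gsol_ode k : odeL p q (ser_of (gsol q (ptilde p))) k = 0.
Proof.
have [/gsol_ode_pos //|k_le0] := ltrP 0 k.
by rewrite -[k]opprK -(lez0_abs k_le0) odeL_ser_neg gsol_rec mulr0.
Qed.

(* For sequences agreeing below n, the coefficients of x^(4-n) differ only
   through the term c4(4-n) a_(-n) = -64 n pi^(n-1) g_n. *)
Lemma odeL_ser_top g g' (n : nat) : (forall i, (i < n)%N -> g' i = g i) ->
  odeL p q (ser_of g') (4%:Z - n%:Z) - odeL p q (ser_of g) (4%:Z - n%:Z)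
  = - 64 * n%:R * (pi^-1 * pi ^+ n) * (g' n - g n).
Proof.
move=> /ser_of_agree agree; rewrite !odeL_shift.
rewrite agree ?(agree (4%:Z - n%:Z - 1%:Z)) ?(agree (4%:Z - n%:Z - 2%:Z))
  ?(agree (4%:Z - n%:Z - 3%:Z)); try lia.
have bottom (h : nat -> R) : ser_of h (4%:Z - n%:Z - 4%:Z) = pi^-1 * pi ^+ n * h n.
  by apply: ser_of_neg; lia.
by rewrite !bottom /ode_c4 intrB; ring.
Qed.

Lemma ode_solution_unique g g' : g' 0%N = g 0%N ->
  (forall k, odeL p q (ser_of g) k = 0) -> (forall k, odeL p q (ser_of g') k = 0) ->
  g' = g.
Proof.
move=> eq0 sol_g sol_g'; apply: boolp.funext => n.
elim/ltn_ind: n => -[|n] IH //.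
have coef_neq0 : - 64 * n.+1%:R * (pi^-1 * pi ^+ n.+1) != 0 :> R.
  by rewrite !mulf_neq0 ?oppr_eq0 ?invr_eq0 ?expf_neq0 ?pnatr_eq0 ?pi_neq0.
have := odeL_ser_top IH; rewrite sol_g sol_g' subrr => /esym/eqP.
by rewrite mulf_eq0 (negbTE coef_neq0) subr_eq0 => /eqP.
Qed.

End Ode.

Theorem proposition3p2 (R : realType) (p q : R) :
  let pt := ptilde p in
  exists g : nat -> R,
    [/\ g 0%N = 1,
        (forall k, odeL p q (ser_of g) k = 0),
        (forall g' : nat -> R, g' 0%N = 1 ->
           (forall k, odeL p q (ser_of g') k = 0) -> g' = g),
        [/\ g 1%N = - q / (2 * pi),
            g 2%N = (2 * pt - q ^+ 2) / (8 * pi ^+ 2),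
            g 3%N = - (q * (-1 - 2 * pt + q ^+ 2)) / (16 * pi ^+ 3) &
            g 4%N = (- 16 * pt - 4 * pt ^+ 2 + 19 * q ^+ 2 + 12 * pt * q ^+ 2
                     - 5 * q ^+ 4) / (128 * pi ^+ 4)] &
        (forall n : nat, (1 <= n)%N ->
           let nr : R := n%:R in
             64 * (nr + 4) * pi ^+ 4 * g (n + 4)%N
           - 32 * q * (4 * nr + 11) * pi ^+ 3 * g (n + 3)%N
           + 4 * (32 + 54 * nr + 29 * nr ^+ 2 + 5 * nr ^+ 3 + 8 * pt * (2 * nr + 3)
                  + 24 * q ^+ 2 + 16 * nr * q ^+ 2) * pi ^+ 2 * g (n + 2)%N
           - 4 * q * (4 * pt * (1 + 4 * nr) + nr * (4 + 11 * nr + 5 * nr ^+ 2))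
               * pi * g (n + 1)%N
           + (nr - 1) * (16 * pt ^+ 2 + 2 * pt * nr * (5 * nr - 2)
                         + nr ^+ 2 * (nr ^+ 2 + nr - 2)) * g n
           = 0)].
Proof.
move=> pt; exists (gsol q pt); split=> //.
- exact: gsol_ode.
- by move=> g' g'0 sol_g'; apply: ode_solution_unique => //; apply: gsol_ode.
- by move=> n _; apply: gsol_rec.
Qed.
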